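(* Let $\gamma\in(1,3)$ and $\mu\in(0,1)$, and let $D=(U_D,H_D)=\big(\frac{2}{3-\gamma},(\frac{\gamma-1}{3-\gamma})^2\big)$. Among the integral curves of $\frac{dH}{dU}=\frac{F(H,U)}{G(H,U)}$ passing through $D$, there is exactly one with $\frac{dH}{dU}\big|_{U=U_D}=C_1:=\frac{(\gamma-1)^2}{3-\gamma}$, namely the special solution $H(U)=\frac{(\gamma-1)^2}{4}U^2$. All other integral curves passing through $D$ satisfy $\frac{dH}{dU}\big|_{U=U_D}=C_2$, where \[ C_2:=\frac{(\gamma-1)\big[-(\gamma-3)^2\mu+\gamma^2-2\gamma+5\big]}{2(3-\gamma)[(\gamma-3)\mu+2]}. \]
   Context: $k_1=\frac{(\gamma+1)+\mu(3-\gamma)}{2}$, $k_2=\frac{2(1-\mu)}{\gamma-1}$, $F(H,U)=2H[H-(U^2-k_1U+\mu)]$, $G(H,U)=H(U+k_2)-U(U-1)(U-\mu)$. An integral curve passing through $D$ is a trajectory of the planar system $\frac{dH}{ds}=F(H,U)$, $\frac{dU}{ds}=G(H,U)$ converging to $D$ (the point $D$ is an equilibrium, with $F=G=0$ and $(U_D-1)^2-H_D=0$). *)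

From Stdlib Require Import Reals.
From Coquelicot Require Import Coquelicot.
Open Scope R_scope.

Definition k1 (g mu : R) : R := ((g + 1) + mu * (3 - g)) / 2.
Definition k2 (g mu : R) : R := 2 * (1 - mu) / (g - 1).
Definition Ffun (g mu H U : R) : R := 2 * H * (H - (U ^ 2 - k1 g mu * U + mu)).
Definition Gfun (g mu H U : R) : R := H * (U + k2 g mu) - U * (U - 1) * (U - mu).

Definition U_D (g : R) : R := 2 / (3 - g).
Definition H_D (g : R) : R := ((g - 1) / (3 - g)) ^ 2.

Definition slopeC1 (g : R) : R := (g - 1) ^ 2 / (3 - g).
Definition slopeC2 (g mu : R) : R :=
  (g - 1) * (- (g - 3) ^ 2 * mu + g ^ 2 - 2 * g + 5)
  / (2 * (3 - g) * ((g - 3) * mu + 2)).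

(* Allowing sigma = -1 covers trajectories converging to D as s -> -oo. *)
Definition traj_to_D (g mu sigma : R) (H U : R -> R) : Prop :=
  (sigma = 1 \/ sigma = -1) /\
  (forall s, 0 <= s ->
     is_derive H s (sigma * Ffun g mu (H s) (U s)) /\
     is_derive U s (sigma * Gfun g mu (H s) (U s))) /\
  (forall s, 0 <= s -> (H s, U s) <> (H_D g, U_D g)) /\
  is_lim H p_infty (H_D g) /\
  is_lim U p_infty (U_D g).

Definition slope_at_D (g : R) (H U : R -> R) (c : R) : Prop :=
  (exists S, forall s, S < s -> U s <> U_D g) /\
  is_lim (fun s => (H s - H_D g) / (U s - U_D g)) p_infty c.

Definition on_special (g : R) (H U : R -> R) : Prop :=
  forall s, 0 <= s -> H s = (g - 1) ^ 2 / 4 * (U s) ^ 2.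

(* Along a trajectory, [gap = H - c U^2] with [c = (g-1)^2/4] solves
   [gap' = sigma K gap], [K = 2H - 2(U-1)(U-mu)], because [F = 2 c U G + gap K].
   So either [gap = 0] throughout (the special solution) or [gap] never vanishes;
   as [K(D) < 0], a nonvanishing gap can only tend to 0 in forward time.
   Writing [G = p(U)(U - U_D) + q(U) gap], the ratio [(U - U_D) / gap] solves
   [ratio' = (p(U) - K) ratio + q(U)], whose coefficients tend to
   [p(U_D) - K(D) < 0] and [q(U_D) > 0]; so the ratio tends to a positive limit,
   and the slope [(H - H_D) / (U - U_D) = 1 / ratio + c (U + U_D)] tends to C2.
   On the parabola the system reduces to [U' = f(U)] with a cubic [f]; an
   explicit primitive of [1 / f] blows up at [U_D], and inverting it gives the
   special trajectory. *)

From Stdlib Require Import Reals Lra Psatz Classical ClassicalEpsilon Ranalysis5.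
From Coquelicot Require Import Coquelicot.
Open Scope R_scope.

Lemma derive_nonneg_le f df a b : a <= b ->
  (forall t, a <= t <= b -> is_derive f t (df t)) ->
  (forall t, a <= t <= b -> 0 <= df t) -> f a <= f b.
Proof.
  intros hab hd hpos. destruct (Req_dec a b) as [<-|hne]; [lra|].
  destruct (MVT_cor2 f df a b) as [c [Hc1 Hc2]]; [lra| |].
  - intros c hc. apply is_derive_Reals, hd. lra.
  - assert (0 <= df c) by (apply hpos; lra). nra.
Qed.

Lemma derive_ge_exp_lower_bound W dW k a b : a <= b ->
  (forall t, a <= t <= b -> is_derive W t (dW t)) ->
  (forall t, a <= t <= b -> - k * W t <= dW t) ->
  W a * exp (- k * (b - a)) <= W b.
Proof.
  intros hab hd hineq.
  assert (hmono : W a * exp (k * a) <= W b * exp (k * b)).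
  { apply (derive_nonneg_le (fun t => W t * exp (k * t))
             (fun t => (dW t + k * W t) * exp (k * t))); [lra| |].
    - intros t ht. assert (hdt := hd t ht).
      assert (E : Derive (fun x => W x) t = dW t) by (apply is_derive_unique; exact hdt).
      auto_derive; [eexists; exact hdt|]. rewrite E. ring.
    - intros t ht. apply Rmult_le_pos; [|left; apply exp_pos].
      specialize (hineq t ht). lra. }
  replace (- k * (b - a)) with (k * a + - (k * b)) by ring.
  rewrite exp_plus, exp_Ropp, <- Rmult_assoc.
  apply (Rmult_le_reg_r (exp (k * b))); [apply exp_pos|].
  rewrite Rmult_assoc, Rinv_l, Rmult_1_r by (apply Rgt_not_eq, exp_pos). exact hmono.
Qed.

Lemma lim_eventually_lt f (l m : R) : is_lim f p_infty l -> l < m ->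
  exists M, forall s, M < s -> f s < m.
Proof.
  intros hl hm. apply is_lim_spec in hl. assert (hpos : 0 < m - l) by lra.
  destruct (hl (mkposreal _ hpos)) as [M HM]. simpl in HM.
  exists M. intros s hs. specialize (HM s hs). apply Rabs_def2 in HM. lra.
Qed.

Lemma lim_eventually_gt f (l m : R) : is_lim f p_infty l -> m < l ->
  exists M, forall s, M < s -> m < f s.
Proof.
  intros hl hm. apply is_lim_spec in hl. assert (hpos : 0 < l - m) by lra.
  destruct (hl (mkposreal _ hpos)) as [M HM]. simpl in HM.
  exists M. intros s hs. specialize (HM s hs). apply Rabs_def2 in HM. lra.
Qed.

Lemma linear_ode_nonvanishing y a s0 t : s0 <= t ->
  (forall s, s0 <= s <= t -> is_derive y s (a s * y s)) ->
  (forall s, s0 <= s <= t -> continuity_pt a s) ->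
  y s0 <> 0 -> y t <> 0.
Proof.
  intros hst hd hc hy0.
  destruct (continuity_ab_min a s0 t hst hc) as [m [hmin _]].
  assert (hbound : y s0 ^ 2 * exp (- (- 2 * a m) * (t - s0)) <= y t ^ 2).
  { apply (derive_ge_exp_lower_bound (fun s => y s ^ 2) (fun s => 2 * a s * y s ^ 2)); [lra| |].
    - intros s hs. assert (hds := hd s hs).
      assert (E : Derive (fun x => y x) s = a s * y s) by (apply is_derive_unique; exact hds).
      auto_derive; [eexists; exact hds|]. rewrite E. ring.
    - intros s hs. specialize (hmin s hs).
      assert (0 <= y s ^ 2) by apply pow2_ge_0. nra. }
  intros hyt. rewrite hyt in hbound.
  assert (0 < y s0 ^ 2) by (apply pow2_gt_0; exact hy0).
  assert (0 < exp (- (- 2 * a m) * (t - s0))) by apply exp_pos. nra.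
Qed.

Lemma is_lim_exp_decay k c : 0 < k -> is_lim (fun t => exp (- k * (t - c))) p_infty 0.
Proof.
  intros hk.
  apply (is_lim_ext (fun t => exp (- k * t + k * c))); [intros t; f_equal; ring|].
  apply is_lim_comp_lin; [|lra].
  replace (Rbar_plus (Rbar_mult (- k) p_infty) (k * c)) with m_infty.
  - exact is_lim_exp_m.
  - rewrite Rbar_mult_comm, (is_Rbar_mult_unique _ _ m_infty); [reflexivity|].
    apply is_Rbar_mult_p_infty_neg. simpl. lra.
Qed.

Lemma linear_ode_eventually_small e al de k eps S : 0 < k -> 0 < eps ->
  (forall s, S <= s -> is_derive e s (al s * e s + de s)) ->
  (forall s, S <= s -> al s <= - k) ->
  (forall s, S <= s -> Rabs (de s) <= k * eps / 2) ->
  exists M, forall t, M < t -> Rabs (e t) < eps.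
Proof.
  intros hk heps hd hal hde.
  set (W := fun s => e s ^ 2 - eps ^ 2 / 4).
  (* [W' <= - k W] because [2 e de <= k e^2 + de^2 / k] *)
  assert (hdecay : forall t, S <= t -> W t <= W S * exp (- k * (t - S))).
  { intros t ht.
    enough (- W S * exp (- k * (t - S)) <= - W t) by lra.
    apply (derive_ge_exp_lower_bound (fun s => - W s)
             (fun s => - (2 * e s * (al s * e s + de s))) k S t ht).
    - intros s hs. assert (hds := hd s ltac:(lra)).
      assert (E : Derive (fun x => e x) s = al s * e s + de s)
        by (apply is_derive_unique; exact hds).
      unfold W. auto_derive; [eexists; exact hds|]. rewrite E. ring.
    - intros s hs. unfold W.
      specialize (hal s ltac:(lra)). specialize (hde s ltac:(lra)).
      set (x := e s) in *. set (d := de s) in *.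
      assert (hxd : x * d <= Rabs x * Rabs d) by (rewrite <- Rabs_mult; apply Rle_abs).
      assert (hsq : 2 * k * (Rabs x * Rabs d) <= k ^ 2 * x ^ 2 + Rabs d ^ 2).
      { rewrite <- (pow2_abs x). pose proof (pow2_ge_0 (k * Rabs x - Rabs d)). nra. }
      assert (hd2 : Rabs d ^ 2 <= k ^ 2 * eps ^ 2 / 4).
      { pose proof (Rabs_pos d). nra. }
      assert (hcross : 2 * (x * d) <= k * x ^ 2 + k * eps ^ 2 / 4).
      { apply (Rmult_le_reg_l k); [exact hk|]. nra. }
      assert (al s * x ^ 2 <= - k * x ^ 2)
        by (apply Rmult_le_compat_r; [apply pow2_ge_0|exact hal]).
      nra. }
  assert (hlim : is_lim (fun t => W S * exp (- k * (t - S))) p_infty 0).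
  { replace (Finite 0) with (Rbar_mult (W S) 0) by (simpl; f_equal; ring).
    apply is_lim_scal_l. apply is_lim_exp_decay, hk. }
  destruct (lim_eventually_lt _ 0 (3 * eps ^ 2 / 4) hlim) as [M HM]; [nra|].
  exists (Rmax S M). intros t ht.
  assert (hSt := Rmax_l S M). assert (hMt := Rmax_r S M).
  specialize (hdecay t ltac:(lra)). specialize (HM t ltac:(lra)).
  cbv beta in HM. unfold W in hdecay, HM. rewrite <- (pow2_abs (e t)) in hdecay.
  assert (0 <= Rabs (e t)) by apply Rabs_pos. nra.
Qed.

Lemma linear_ode_limit r al be (a0 b0 : R) S : a0 < 0 ->
  (forall s, S <= s -> is_derive r s (al s * r s + be s)) ->
  is_lim al p_infty a0 -> is_lim be p_infty b0 ->
  is_lim r p_infty (- b0 / a0).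
Proof.
  intros ha0 hd hal hbe. set (L := - b0 / a0). set (k := - a0 / 2).
  assert (hde : is_lim (fun s => be s + al s * L) p_infty 0).
  { replace (Finite 0) with (Rbar_plus b0 (Rbar_mult a0 L))
      by (simpl; f_equal; unfold L; field; lra).
    apply (is_lim_plus _ _ _ b0 (Rbar_mult a0 L)); [exact hbe| apply is_lim_scal_r, hal|].
    constructor. }
  apply is_lim_spec. intros eps.
  destruct (lim_eventually_lt al a0 (- k) hal) as [M1 HM1]; [unfold k; lra|].
  destruct (lim_eventually_lt (fun s => Rabs (be s + al s * L)) 0 (k * eps / 2)) as [M2 HM2].
  { apply is_lim_Rabs in hde. simpl in hde. rewrite Rabs_R0 in hde. exact hde. }
  { assert (0 < eps) by apply cond_pos. unfold k. nra. }
  set (S1 := Rmax S (Rmax M1 M2) + 1).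
  assert (hS1 : S <= S1 /\ M1 < S1 /\ M2 < S1).
  { unfold S1. pose proof (Rmax_l S (Rmax M1 M2)). pose proof (Rmax_r S (Rmax M1 M2)).
    pose proof (Rmax_l M1 M2). pose proof (Rmax_r M1 M2). lra. }
  apply (linear_ode_eventually_small (fun s => r s - L) al (fun s => be s + al s * L) k eps S1).
  - unfold k. lra.
  - apply cond_pos.
  - intros s hs. replace (al s * (r s - L) + (be s + al s * L)) with (al s * r s + be s) by ring.
    assert (hds := hd s ltac:(lra)).
    assert (E : Derive (fun x => r x) s = al s * r s + be s) by (apply is_derive_unique; exact hds).
    auto_derive; [eexists; exact hds|]. rewrite E. ring.
  - intros s hs. apply Rlt_le, HM1. lra.
  - intros s hs. apply Rlt_le, HM2. lra.
Qed.

Section InverseFlow.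
Variables (f Phi : R -> R) (a b : R).
Hypotheses (hab : a < b)
  (f_neg : forall V, a < V -> f V < 0)
  (Phi_derive : forall V, a < V -> is_derive Phi V (/ f V))
  (Phi_unbounded : forall T, exists V, a < V <= b /\ T <= Phi V).

Lemma Phi_decreasing x y : a < x -> x < y -> Phi y < Phi x.
Proof.
  intros hx hxy. enough (- Phi x < - Phi y) by lra.
  apply (incr_function (fun V => - Phi V) a p_infty (fun V => - / f V)); try easy.
  - intros V hV _. apply (is_derive_opp Phi V (/ f V)), Phi_derive, hV.
  - intros V hV _. apply Ropp_gt_lt_0_contravar, Rinv_lt_0_compat, f_neg, hV.
Qed.

Lemma Phi_continuous V : a < V -> continuity_pt Phi V.
Proof.
  intros hV. apply continuity_pt_filterlim, (ex_derive_continuous Phi).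
  eexists. apply Phi_derive, hV.
Qed.

(* Since [Phi' = 1 / f], [U' = f U] holds along [Phi U = Phi b + 1 + s]; the shift
   by 1 makes [s = 0] an interior point of the domain [s >= -1]. *)
Definition flow (s : R) : R :=
  epsilon (inhabits b) (fun V => a < V <= b /\ Phi V = Phi b + 1 + s).

Lemma flow_spec s : -1 <= s -> a < flow s <= b /\ Phi (flow s) = Phi b + 1 + s.
Proof.
  intros hs. unfold flow. apply epsilon_spec.
  destruct (Phi_unbounded (Phi b + 1 + s)) as [V1 [[hV1 hV1b] hPhiV1]].
  destruct (Req_dec V1 b) as [->|hne].
  { exists b. split; [lra|]. lra. }
  destruct (f_interv_is_interv (fun V => - Phi V) V1 b (- (Phi b + 1 + s)))
    as [V [hV hPhiV]]; [lra|lra| |].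
  - intros V hV. apply continuity_pt_opp, Phi_continuous. lra.
  - exists V. split; [lra|]. lra.
Qed.

Lemma flow_derive s : -1 < s -> is_derive flow s (f (flow s)).
Proof.
  intros hs.
  set (clock := fun V => Phi V - Phi b - 1).
  destruct (flow_spec (s + 1)) as [[hlb1 hlb2] hPhilb]; [lra|].
  destruct (flow_spec s) as [[hx1 hx2] hPhix]; [lra|].
  assert (hlt : flow (s + 1) < b).
  { destruct hlb2 as [h|h]; [exact h|]. rewrite h in hPhilb. lra. }
  assert (hdecr : forall x y, flow (s + 1) <= x -> x < y -> y <= b -> clock y < clock x).
  { intros x y hx hxy hy. unfold clock. pose proof (Phi_decreasing x y). lra. }
  assert (henc : clock b < s < clock (flow (s + 1))) by (unfold clock; lra).
  assert (hinv : forall x, clock b <= x -> x <= clock (flow (s + 1)) -> comp clock flow x = id x).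
  { intros x hx _. unfold comp, id, clock. unfold clock in hx.
    destruct (flow_spec x) as [_ hPhi]; lra. }
  assert (hwf : forall x, clock b <= x -> x <= clock (flow (s + 1)) ->
                   flow (s + 1) <= flow x <= b).
  { intros x hx hx'. unfold clock in hx, hx'.
    destruct (flow_spec x) as [[hf1 hf2] hPhi]; [lra|]. split; [|exact hf2].
    destruct (Rle_or_lt (flow (s + 1)) (flow x)) as [h|h]; [exact h|].
    pose proof (Phi_decreasing (flow x) (flow (s + 1)) hf1 h). lra. }
  assert (hclock : forall V, a < V -> derivable_pt_lim clock V (/ f V)).
  { intros V hV. apply is_derive_Reals. unfold clock.
    assert (hd := Phi_derive V hV).
    assert (E : Derive (fun x => Phi x) V = / f V) by (apply is_derive_unique; exact hd).
    auto_derive; [eexists; exact hd|]. rewrite E. ring. }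
  assert (hPrf : forall V, flow (s + 1) <= V <= b -> derivable_pt clock V).
  { intros V hV. exists (/ f V). apply hclock. lra. }
  assert (hfx : f (flow s) <> 0) by (apply Rlt_not_eq, f_neg, hx1).
  assert (hDf : derive_pt clock (flow s)
      (derivable_pt_recip_interv_prelim1_decr clock flow (flow (s + 1)) b s hlt henc hwf hPrf) <> 0).
  { rewrite (derive_pt_eq_0 _ _ _ _ (hclock _ hx1)). apply Rinv_neq_0_compat, hfx. }
  pose proof (derive_pt_recip_interv_decr clock flow (flow (s + 1)) b s hlt henc hdecr hwf hPrf hinv hDf) as hder.
  rewrite (derive_pt_eq_0 _ _ _ _ (hclock _ hx1)) in hder.
  replace (f (flow s)) with (1 / / f (flow s)) by (field; exact hfx).
  apply is_derive_Reals, (derive_pt_eq_1 _ _ _ _ hder).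
Qed.

Lemma flow_lim : is_lim flow p_infty a.
Proof.
  apply is_lim_spec. intros eps. pose proof (cond_pos eps).
  set (v := Rmin (a + eps / 2) b).
  assert (hv : a < v <= a + eps / 2) by (split; [apply Rmin_glb_lt; lra| apply Rmin_l]).
  exists (Rmax 0 (Phi v - Phi b - 1)). intros s hs.
  pose proof (Rmax_l 0 (Phi v - Phi b - 1)). pose proof (Rmax_r 0 (Phi v - Phi b - 1)).
  destruct (flow_spec s) as [[hs1 _] hPhi]; [lra|].
  assert (flow s < v).
  { destruct (Rlt_or_le (flow s) v) as [h|[h|h]]; [exact h| |rewrite <- h in hPhi; lra].
    pose proof (Phi_decreasing v (flow s)). lra. }
  apply Rabs_def1; lra.
Qed.

End InverseFlow.

Definition parab_coef (g : R) : R := (g - 1) ^ 2 / 4.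
Definition Kfun (mu H U : R) : R := 2 * H - 2 * (U - 1) * (U - mu).
Definition pfun (g mu U : R) : R := U * ((parab_coef g - 1) * U + mu * (3 - g) / 2).
Definition qfun (g mu U : R) : R := U + k2 g mu.

Section Algebra.
Variables (g mu : R).
Hypotheses (hg1 : 1 < g) (hg3 : g < 3) (hmu0 : 0 < mu) (hmu1 : mu < 1).

Lemma Ffun_decomp H U : Ffun g mu H U =
  2 * parab_coef g * U * Gfun g mu H U + (H - parab_coef g * U ^ 2) * Kfun mu H U.
Proof. unfold Ffun, Gfun, parab_coef, Kfun, k1, k2. field. lra. Qed.

Lemma Gfun_decomp H U : Gfun g mu H U =
  pfun g mu U * (U - U_D g) + qfun g mu U * (H - parab_coef g * U ^ 2).
Proof. unfold Gfun, pfun, qfun, parab_coef, U_D, k2. field. lra. Qed.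

Lemma H_D_on_parab : H_D g = parab_coef g * U_D g ^ 2.
Proof. unfold parab_coef, U_D, H_D. field. lra. Qed.

Lemma U_D_pos : 0 < U_D g.
Proof. unfold U_D. apply Rdiv_lt_0_compat; lra. Qed.

Lemma Kfun_D_neg : Kfun mu (H_D g) (U_D g) < 0.
Proof.
  replace (Kfun mu (H_D g) (U_D g)) with (- (2 * (g - 1) * (1 - mu)) / (3 - g))
    by (unfold Kfun, H_D, U_D; field; lra).
  apply Rdiv_neg_pos; [|lra]. nra.
Qed.

Lemma pfun_D_neg : pfun g mu (U_D g) < 0.
Proof.
  replace (pfun g mu (U_D g)) with ((mu * (3 - g) - (g + 1)) / (3 - g))
    by (unfold pfun, parab_coef, U_D; field; lra).
  apply Rdiv_neg_pos; [|lra]. nra.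
Qed.

Lemma pfun_lt_Kfun_D : pfun g mu (U_D g) < Kfun mu (H_D g) (U_D g).
Proof.
  enough (pfun g mu (U_D g) - Kfun mu (H_D g) (U_D g) < 0) by lra.
  replace (pfun g mu (U_D g) - Kfun mu (H_D g) (U_D g))
    with (- ((1 - mu) * (3 - g) + mu * (2 * g - 2)) / (3 - g))
    by (unfold pfun, Kfun, parab_coef, U_D, H_D; field; lra).
  apply Rdiv_neg_pos; [|lra]. nra.
Qed.

Lemma qfun_D_pos : 0 < qfun g mu (U_D g).
Proof.
  unfold qfun, k2. pose proof U_D_pos.
  assert (0 < 2 * (1 - mu) / (g - 1)) by (apply Rdiv_lt_0_compat; lra). lra.
Qed.

Lemma slopeC1_eq : slopeC1 g = 2 * parab_coef g * U_D g.
Proof. unfold slopeC1, parab_coef, U_D. field. lra. Qed.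

Lemma slopeC2_eq : slopeC2 g mu =
  slopeC1 g + (Kfun mu (H_D g) (U_D g) - pfun g mu (U_D g)) / qfun g mu (U_D g).
Proof.
  unfold slopeC2, slopeC1, Kfun, pfun, qfun, parab_coef, U_D, H_D, k2.
  assert ((g - 3) * mu + 2 <> 0) by nra.
  assert (2 * (1 - mu) * (3 - g) + 2 * (g - 1) <> 0) by nra.
  field. repeat split; lra.
Qed.

Lemma slopeC1_lt_C2 : slopeC1 g < slopeC2 g mu.
Proof.
  rewrite slopeC2_eq. pose proof pfun_lt_Kfun_D. pose proof qfun_D_pos.
  assert (0 < (Kfun mu (H_D g) (U_D g) - pfun g mu (U_D g)) / qfun g mu (U_D g))
    by (apply Rdiv_lt_0_compat; lra). lra.
Qed.

End Algebra.

Lemma lim_const x (a l : R) : l = a -> is_lim (fun _ => a) x l.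
Proof. intros ->. apply is_lim_const. Qed.

Lemma lim_plus f h x (a b l : R) : is_lim f x a -> is_lim h x b -> l = a + b ->
  is_lim (fun y => f y + h y) x l.
Proof. intros ha hb ->. apply is_lim_plus'; assumption. Qed.

Lemma lim_minus f h x (a b l : R) : is_lim f x a -> is_lim h x b -> l = a - b ->
  is_lim (fun y => f y - h y) x l.
Proof. intros ha hb ->. apply is_lim_minus'; assumption. Qed.

Lemma lim_mult f h x (a b l : R) : is_lim f x a -> is_lim h x b -> l = a * b ->
  is_lim (fun y => f y * h y) x l.
Proof. intros ha hb ->. apply (is_lim_mult f h x a b ha hb). exact I. Qed.

Lemma lim_pow2 f x (a l : R) : is_lim f x a -> l = a ^ 2 -> is_lim (fun y => f y ^ 2) x l.
Proof.
  intros ha ->. apply (is_lim_ext (fun y => f y * f y)); [intros y; ring|].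
  apply (lim_mult f f x a a); [exact ha|exact ha|ring].
Qed.

Lemma lim_inv f x (a l : R) : is_lim f x a -> a <> 0 -> l = / a -> is_lim (fun y => / f y) x l.
Proof.
  intros ha hne ->. apply (is_lim_inv f x a ha). intros E. apply hne. injection E. easy.
Qed.

Ltac solve_lim := first
  [ eassumption
  | eapply lim_const
  | eapply lim_plus; [solve_lim | solve_lim | ]
  | eapply lim_minus; [solve_lim | solve_lim | ]
  | eapply lim_mult; [solve_lim | solve_lim | ]
  | eapply lim_pow2; [solve_lim | ] ];
  try reflexivity.

Lemma slope_at_D_unique g H U c1 c2 :
  slope_at_D g H U c1 -> slope_at_D g H U c2 -> c1 = c2.
Proof.
  intros [_ h1] [_ h2]. apply is_lim_unique in h1, h2. rewrite h1 in h2. injection h2. easy.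
Qed.

Section Trajectory.
Variables (g mu sigma : R) (H U : R -> R).
Hypotheses (hg1 : 1 < g) (hg3 : g < 3) (hmu0 : 0 < mu) (hmu1 : mu < 1)
  (hsigma : sigma = 1 \/ sigma = -1)
  (hderiv : forall s, 0 <= s ->
     is_derive H s (sigma * Ffun g mu (H s) (U s)) /\
     is_derive U s (sigma * Gfun g mu (H s) (U s)))
  (hlimH : is_lim H p_infty (H_D g)) (hlimU : is_lim U p_infty (U_D g)).

Let gap (s : R) : R := H s - parab_coef g * U s ^ 2.

Lemma gap_derive s : 0 <= s -> is_derive gap s (sigma * Kfun mu (H s) (U s) * gap s).
Proof.
  intros hs. destruct (hderiv s hs) as [dH dU].
  assert (EH : Derive (fun x => H x) s = sigma * Ffun g mu (H s) (U s))
    by (apply is_derive_unique; exact dH).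
  assert (EU : Derive (fun x => U x) s = sigma * Gfun g mu (H s) (U s))
    by (apply is_derive_unique; exact dU).
  unfold gap. auto_derive; [repeat split; eexists; eassumption|].
  rewrite EH, EU, Ffun_decomp by lra. ring.
Qed.

Lemma gap_lim : is_lim gap p_infty 0.
Proof. unfold gap. solve_lim. rewrite H_D_on_parab by lra. ring. Qed.

Lemma Kfun_lim : is_lim (fun s => Kfun mu (H s) (U s)) p_infty (Kfun mu (H_D g) (U_D g)).
Proof. unfold Kfun. solve_lim. Qed.

Lemma gap_nonvanishing s0 t : 0 <= s0 <= t -> gap s0 <> 0 -> gap t <> 0.
Proof.
  intros hs hgap.
  apply (linear_ode_nonvanishing gap (fun s => sigma * Kfun mu (H s) (U s)) s0 t); try easy.
  - intros s h. apply gap_derive. lra.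
  - intros s h. destruct (hderiv s ltac:(lra)) as [dH dU].
    apply continuity_pt_filterlim, (ex_derive_continuous (fun s => sigma * Kfun mu (H s) (U s))).
    unfold Kfun. auto_derive. repeat split; eexists; eassumption.
Qed.

(* In backward time [gap^2] would eventually grow, as [K < 0] near [D]. *)
Lemma forward_in_time s0 : 0 <= s0 -> gap s0 <> 0 -> sigma = 1.
Proof.
  intros hs0 hgap. destruct hsigma as [h|hneg]; [exact h|exfalso].
  pose proof (Kfun_D_neg g mu hg1 hg3 hmu1) as hK0.
  destruct (lim_eventually_lt _ _ 0 Kfun_lim hK0) as [M HM].
  set (S := Rmax s0 M + 1).
  assert (hS : s0 <= S /\ M < S) by (unfold S; pose proof (Rmax_l s0 M); pose proof (Rmax_r s0 M); lra).
  assert (hgrow : forall t, S <= t -> gap S ^ 2 <= gap t ^ 2).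
  { intros t ht. apply (derive_nonneg_le (fun s => gap s ^ 2)
      (fun s => 2 * (- Kfun mu (H s) (U s)) * gap s ^ 2)); [exact ht| |].
    - intros s h. assert (hd := gap_derive s ltac:(lra)). rewrite hneg in hd.
      assert (E : Derive (fun x => gap x) s = -1 * Kfun mu (H s) (U s) * gap s)
        by (apply is_derive_unique; exact hd).
      auto_derive; [eexists; exact hd|]. rewrite E. ring.
    - intros s h. specialize (HM s ltac:(lra)).
      pose proof (pow2_ge_0 (gap s)). nra. }
  assert (hle : Rbar_le (gap S ^ 2) 0).
  { apply (is_lim_le_loc (fun _ => gap S ^ 2) (fun s => gap s ^ 2) p_infty).
    - exists S. intros t ht. apply hgrow. lra.
    - apply is_lim_const.
    - apply (lim_pow2 gap _ 0); [exact gap_lim|ring]. }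
  simpl in hle. assert (gap S ^ 2 > 0) by (apply pow2_gt_0, (gap_nonvanishing s0); lra). lra.
Qed.

Let ratio (s : R) : R := (U s - U_D g) / gap s.

Lemma ratio_derive s : sigma = 1 -> 0 <= s -> gap s <> 0 ->
  is_derive ratio s ((pfun g mu (U s) - Kfun mu (H s) (U s)) * ratio s + qfun g mu (U s)).
Proof.
  intros hpos hs hgap. rewrite hpos in hderiv. destruct (hderiv s hs) as [dH dU].
  assert (EH : Derive (fun x => H x) s = 1 * Ffun g mu (H s) (U s))
    by (apply is_derive_unique; exact dH).
  assert (EU : Derive (fun x => U x) s = 1 * Gfun g mu (H s) (U s))
    by (apply is_derive_unique; exact dU).
  unfold ratio, gap in *. auto_derive; [repeat split; try (eexists; eassumption); exact hgap|].
  rewrite EH, EU, Ffun_decomp, Gfun_decomp by lra. field. exact hgap.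
Qed.

Lemma ratio_lim s0 : 0 <= s0 -> gap s0 <> 0 -> is_lim ratio p_infty
  (qfun g mu (U_D g) / (Kfun mu (H_D g) (U_D g) - pfun g mu (U_D g))).
Proof.
  intros hs0 hgap. pose proof (forward_in_time s0 hs0 hgap) as hpos.
  pose proof (pfun_lt_Kfun_D g mu hg1 hg3 hmu0 hmu1).
  replace (qfun g mu (U_D g) / (Kfun mu (H_D g) (U_D g) - pfun g mu (U_D g)))
    with (- qfun g mu (U_D g) / (pfun g mu (U_D g) - Kfun mu (H_D g) (U_D g))) by (field; lra).
  apply (linear_ode_limit ratio (fun s => pfun g mu (U s) - Kfun mu (H s) (U s))
           (fun s => qfun g mu (U s)) _ _ s0); [lra| | |].
  - intros s hs. apply ratio_derive; [exact hpos|lra|]. apply (gap_nonvanishing s0); lra.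
  - unfold pfun, Kfun. solve_lim.
  - unfold qfun. solve_lim.
Qed.

Lemma slope_generic : ~ on_special g H U -> slope_at_D g H U (slopeC2 g mu).
Proof.
  intros hns. apply not_all_ex_not in hns. destruct hns as [s0 hs0].
  apply imply_to_and in hs0. destruct hs0 as [hs0 hoff].
  assert (hgap : gap s0 <> 0) by (unfold gap, parab_coef; intros E; apply hoff; lra).
  set (Lr := qfun g mu (U_D g) / (Kfun mu (H_D g) (U_D g) - pfun g mu (U_D g))).
  assert (hLr : 0 < Lr).
  { pose proof (pfun_lt_Kfun_D g mu hg1 hg3 hmu0 hmu1). pose proof (qfun_D_pos g mu hg1 hg3 hmu1).
    apply Rdiv_lt_0_compat; lra. }
  destruct (lim_eventually_gt ratio Lr (Lr / 2) (ratio_lim s0 hs0 hgap)) as [M HM]; [lra|].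
  set (S := Rmax s0 M).
  assert (hoffD : forall s, S < s -> U s <> U_D g /\ gap s <> 0).
  { intros s hs. pose proof (Rmax_l s0 M). pose proof (Rmax_r s0 M).
    split; [|apply (gap_nonvanishing s0); unfold S in hs; lra].
    intros E. specialize (HM s ltac:(unfold S in hs; lra)).
    unfold ratio in HM. rewrite E, Rminus_diag, Rdiv_0_l in HM. lra. }
  split; [exists S; intros s hs; apply hoffD, hs|].
  apply (is_lim_ext_loc (fun s => / ratio s + parab_coef g * (U s + U_D g))).
  - exists S. intros s hs. destruct (hoffD s hs) as [hU hg].
    unfold ratio, gap in *. rewrite H_D_on_parab by lra. field.
    split; [lra|exact hg].
  - apply (lim_plus _ _ _ (/ Lr) (parab_coef g * (U_D g + U_D g))).
    + apply (lim_inv ratio _ Lr); [exact (ratio_lim s0 hs0 hgap)|lra|reflexivity].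
    + solve_lim.
    + rewrite slopeC2_eq, slopeC1_eq by lra. unfold Lr.
      pose proof (pfun_lt_Kfun_D g mu hg1 hg3 hmu0 hmu1). pose proof (qfun_D_pos g mu hg1 hg3 hmu1).
      field. lra.
Qed.

End Trajectory.

Lemma slope_special g H U : 1 < g -> g < 3 ->
  (forall s, 0 <= s -> (H s, U s) <> (H_D g, U_D g)) ->
  is_lim U p_infty (U_D g) -> on_special g H U -> slope_at_D g H U (slopeC1 g).
Proof.
  intros hg1 hg3 hne hlimU hon.
  assert (hU : forall s, 0 <= s -> U s <> U_D g).
  { intros s hs E. apply (hne s hs). rewrite (hon s hs), E, H_D_on_parab by lra. reflexivity. }
  split; [exists 0; intros s hs; apply hU; lra|].
  apply (is_lim_ext_loc (fun s => parab_coef g * (U s + U_D g))).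
  - exists 0. intros s hs. rewrite (hon s ltac:(lra)), H_D_on_parab by lra.
    unfold parab_coef. field. intros E. apply (hU s); lra.
  - rewrite slopeC1_eq by lra. solve_lim. ring.
Qed.

Definition special_field (g mu V : R) : R := pfun g mu V * (V - U_D g).

Definition pfun_root (g mu : R) : R := mu * (3 - g) / 2 / (1 - parab_coef g).

Section SpecialSolution.
Variables (g mu : R).
Hypotheses (hg1 : 1 < g) (hg3 : g < 3) (hmu0 : 0 < mu) (hmu1 : mu < 1).

Let c := parab_coef g.
Let u := U_D g.
Let r := pfun_root g mu.

Lemma parab_coef_bounds : 0 < c < 1.
Proof. unfold c, parab_coef. split; nra. Qed.

Lemma pfun_root_bounds : 0 < r < u.
Proof.
  pose proof parab_coef_bounds. assert (hu : 0 < u) by exact (U_D_pos g hg3).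
  pose proof (pfun_D_neg g mu hg1 hg3 hmu0 hmu1) as hp. unfold pfun in hp.
  assert (hlin : (c - 1) * u + mu * (3 - g) / 2 < 0).
  { destruct (Rlt_or_le ((c - 1) * u + mu * (3 - g) / 2) 0) as [h|h]; [exact h|].
    fold c u in hp. nra. }
  unfold r, pfun_root. fold c. split.
  - apply Rdiv_lt_0_compat; [|lra]. nra.
  - apply (Rmult_lt_reg_r (1 - c)); [lra|]. unfold Rdiv. rewrite Rmult_assoc, Rinv_l by lra. lra.
Qed.

Lemma special_field_factor V : special_field g mu V = (c - 1) * V * (V - u) * (V - r).
Proof.
  pose proof parab_coef_bounds. unfold special_field, pfun, r, pfun_root. fold c u. field. lra.
Qed.

Lemma special_field_neg V : u < V -> special_field g mu V < 0.
Proof.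
  intros hV. rewrite special_field_factor.
  pose proof parab_coef_bounds. pose proof pfun_root_bounds.
  assert (0 < V * (V - u) * (V - r)) by (repeat apply Rmult_lt_0_compat; lra). nra.
Qed.

(* A primitive of [1 / special_field], by partial fractions. *)
Definition special_clock (V : R) : R :=
  - (ln V / (u * r) + ln (V - u) / (u * (u - r)) - ln (V - r) / (r * (u - r))) / (1 - c).

Lemma special_clock_derive V : u < V -> is_derive special_clock V (/ special_field g mu V).
Proof.
  intros hV. pose proof parab_coef_bounds. pose proof pfun_root_bounds.
  unfold special_clock. auto_derive; [repeat split; lra|].
  rewrite special_field_factor. field. repeat split; lra.
Qed.

Lemma special_clock_lower_bound V : u < V <= u + 1 ->
  - (ln (u + 1) / (u * r) - ln (u - r) / (r * (u - r))) / (1 - c)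
  - ln (V - u) / (u * (u - r) * (1 - c)) <= special_clock V.
Proof.
  intros hV. pose proof parab_coef_bounds. pose proof pfun_root_bounds.
  assert (hlnV : ln V <= ln (u + 1)) by (apply ln_le; lra).
  assert (hlnVr : ln (u - r) <= ln (V - r)) by (apply ln_le; lra).
  set (X := ln V / (u * r) - ln (V - r) / (r * (u - r))).
  set (X0 := ln (u + 1) / (u * r) - ln (u - r) / (r * (u - r))).
  assert (hX : X <= X0).
  { unfold X, X0, Rdiv. apply Rplus_le_compat.
    - apply Rmult_le_compat_r; [|exact hlnV]. left. apply Rinv_0_lt_compat. nra.
    - apply Ropp_le_contravar, Rmult_le_compat_r; [|exact hlnVr].
      left. apply Rinv_0_lt_compat. nra. }
  enough (0 <= special_clock V - (- X0 / (1 - c) - ln (V - u) / (u * (u - r) * (1 - c)))) by lra.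
  replace (special_clock V - _) with ((X0 - X) / (1 - c))
    by (unfold special_clock, X, X0; field; repeat split; lra).
  apply Rdiv_le_0_compat; lra.
Qed.

Lemma special_clock_unbounded T : exists V, u < V <= u + 1 /\ T <= special_clock V.
Proof.
  pose proof parab_coef_bounds. pose proof pfun_root_bounds.
  assert (hu : 0 < u) by exact (U_D_pos g hg3).
  set (L0 := - (ln (u + 1) / (u * r) - ln (u - r) / (r * (u - r))) / (1 - c)).
  set (B := / (u * (u - r) * (1 - c))).
  assert (hB : 0 < B).
  { apply Rinv_0_lt_compat, Rmult_lt_0_compat; [apply Rmult_lt_0_compat|]; lra. }
  set (M := Rmax 0 ((T - L0) / B)).
  assert (hM0 : 0 <= M) by apply Rmax_l.
  assert (hMT : (T - L0) / B <= M) by apply Rmax_r.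
  exists (u + exp (- M)).
  assert (hexp : exp (- M) <= 1).
  { rewrite <- exp_0. destruct hM0 as [h|h]; [left; apply exp_increasing; lra|].
    rewrite <- h, Ropp_0. lra. }
  pose proof (exp_pos (- M)).
  split; [lra|].
  eapply Rle_trans; [|apply special_clock_lower_bound; lra].
  replace (u + exp (- M) - u) with (exp (- M)) by ring. rewrite ln_exp. fold L0.
  replace (- M / (u * (u - r) * (1 - c))) with (- (M * B)) by (unfold B; field; repeat split; lra).
  apply (Rmult_le_compat_r B) in hMT; [|lra].
  unfold Rdiv in hMT. rewrite Rmult_assoc, Rinv_l, Rmult_1_r in hMT by lra. lra.
Qed.

Lemma special_solution_exists : exists sigma H U, traj_to_D g mu sigma H U /\ on_special g H U.
Proof.
  pose proof (U_D_pos g hg3) as hu.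
  set (Psi := flow special_clock u (u + 1)).
  assert (hflow : forall s, -1 <= s -> u < Psi s).
  { intros s hs. apply (flow_spec (special_field g mu) special_clock u (u + 1));
      solve [lra | exact special_clock_derive | exact special_clock_unbounded]. }
  assert (hG : forall V, Gfun g mu (c * V ^ 2) V = special_field g mu V).
  { intros V. rewrite Gfun_decomp by lra. unfold special_field. fold c u. ring. }
  assert (hF : forall V, Ffun g mu (c * V ^ 2) V = 2 * c * V * special_field g mu V).
  { intros V. rewrite Ffun_decomp, hG by lra. fold c. ring. }
  exists 1, (fun s => c * Psi s ^ 2), Psi.
  split; [|intros s _; reflexivity].
  split; [left; reflexivity|].
  split.
  { intros s hs. assert (hd : is_derive Psi s (special_field g mu (Psi s))).
    { apply (flow_derive (special_field g mu) special_clock u (u + 1));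
        solve [lra | exact special_field_neg | exact special_clock_derive
              | exact special_clock_unbounded]. }
    assert (E : Derive (fun x => Psi x) s = special_field g mu (Psi s))
      by (apply is_derive_unique; exact hd).
    rewrite hF, hG, !Rmult_1_l. split; [|exact hd].
    auto_derive; [eexists; exact hd|]. rewrite E. ring. }
  assert (hlim : is_lim Psi p_infty u).
  { apply (flow_lim (special_field g mu) special_clock u (u + 1));
      solve [lra | exact special_field_neg | exact special_clock_derive
            | exact special_clock_unbounded]. }
  split.
  { intros s hs E. injection E as _ EU. specialize (hflow s ltac:(lra)). fold u in EU. lra. }
  split; [|exact hlim].
  rewrite H_D_on_parab by lra. fold c u. solve_lim.
Qed.

End SpecialSolution.

Theorem lemma4p2 (g mu : R) (hg1 : 1 < g) (hg3 : g < 3) (hmu0 : 0 < mu) (hmu1 : mu < 1) :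
  (* the special solution is an integral curve through D, with slope C1 *)
  (exists sigma H U, traj_to_D g mu sigma H U /\ on_special g H U /\ slope_at_D g H U (slopeC1 g)) /\
  (* every integral curve through D has slope C1 or C2 at D, and slope C1
     exactly when it is (a piece of) the special solution *)
  (forall sigma H U, traj_to_D g mu sigma H U ->
     (slope_at_D g H U (slopeC1 g) \/ slope_at_D g H U (slopeC2 g mu)) /\
     (slope_at_D g H U (slopeC1 g) <-> on_special g H U)).
Proof.
  split.
  - destruct (special_solution_exists g mu hg1 hg3 hmu0 hmu1) as [sigma [H [U [htraj hon]]]].
    exists sigma, H, U. split; [exact htraj|]. split; [exact hon|].
    destruct htraj as [_ [_ [hne [_ hlimU]]]].
    exact (slope_special g H U hg1 hg3 hne hlimU hon).
  - intros sigma H U [hsigma [hderiv [hne [hlimH hlimU]]]].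
    destruct (classic (on_special g H U)) as [hon|hoff].
    + pose proof (slope_special g H U hg1 hg3 hne hlimU hon). tauto.
    + assert (hC2 : slope_at_D g H U (slopeC2 g mu)) by (eapply slope_generic; eassumption).
      split; [right; exact hC2|]. split; [|intros hon; contradiction].
      intros hC1. pose proof (slope_at_D_unique g H U _ _ hC1 hC2).
      pose proof (slopeC1_lt_C2 g mu hg1 hg3 hmu0 hmu1). lra.
Qed.
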